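(* Every finite groupoid $\langle A;\cdot\rangle$ with an identity element which is an Abelian algebra is a Hamiltonian algebra.
   Context: A groupoid is an algebra $\langle A;\cdot\rangle$ with one binary operation (its subalgebras are the nonempty subsets closed under $\cdot$); an identity element is $1\in A$ with $1\cdot a=a\cdot 1=a$ for all $a$. A polynomial operation of an algebra is an operation obtained from a term by substituting elements of the algebra for some of its variables. An algebra is called Abelian if for every polynomial operation $t(x,y_1,\ldots,y_n)$ and all elements $u,v,c_1,\ldots,c_n,d_1,\ldots,d_n$ of the algebra, $t(u,c_1,\ldots,c_n)=t(u,d_1,\ldots,d_n)$ implies $t(v,c_1,\ldots,c_n)=t(v,d_1,\ldots,d_n)$. An algebra is called Hamiltonian if the universe of every subalgebra is an equivalence class (block) of some congruence of the algebra. *)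

From mathcomp Require Import all_boot.
Set Implicit Arguments. Unset Strict Implicit. Unset Printing Implicit Defensive.

(* Terms of the language of groupoids with constants from A (polynomials):
   variables are indexed by nat, constants are elements of A. *)
Inductive pterm (A : Type) : Type :=
| PVar : nat -> pterm A
| PConst : A -> pterm A
| PApp : pterm A -> pterm A -> pterm A.

Fixpoint peval (A : Type) (op : A -> A -> A) (e : nat -> A) (t : pterm A) : A :=
  match t with
  | PVar i => e i
  | PConst a => a
  | PApp t1 t2 => op (peval op e t1) (peval op e t2)
  end.

(* environment: variable 0 is x := u, variable i.+1 is y_(i+1) := c i *)
Definition env0 (A : Type) (u : A) (c : nat -> A) : nat -> A :=
  fun i => match i with 0 => u | j.+1 => c j end.

Definition is_identity (A : Type) (op : A -> A -> A) (one : A) : Prop :=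
  forall a, op one a = a /\ op a one = a.

Definition abelian_alg (A : Type) (op : A -> A -> A) : Prop :=
  forall (t : pterm A) (u v : A) (c d : nat -> A),
    peval op (env0 u c) t = peval op (env0 u d) t ->
    peval op (env0 v c) t = peval op (env0 v d) t.

Definition is_subalgebra (A : finType) (op : A -> A -> A) (S : {set A}) : Prop :=
  S != set0 /\ forall a b, a \in S -> b \in S -> op a b \in S.

Definition is_congruence (A : Type) (op : A -> A -> A) (R : A -> A -> Prop) : Prop :=
  (forall a, R a a) /\ (forall a b, R a b -> R b a) /\
  (forall a b c, R a b -> R b c -> R a c) /\
  (forall a a' b b', R a a' -> R b b' -> R (op a b) (op a' b')).

Definition hamiltonian_alg (A : finType) (op : A -> A -> A) : Prop :=
  forall S : {set A}, is_subalgebra op S ->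
    exists R : A -> A -> Prop, is_congruence op R /\
      exists a : A, forall x : A, x \in S <-> R a x.

From mathcomp Require Import all_boot.

(* The term condition, applied to polynomials in which the identity can be
   substituted for x, forces the groupoid to be a commutative cancellative
   monoid; being finite, it is an abelian group. A subalgebra S of a finite
   abelian group is a subgroup, and S is the class of the identity for the
   congruence "a s = b s' for some s, s' in S", i.e. congruence modulo S. *)

Section AbelianUnitalGroupoid.

Variables (A : Type) (op : A -> A -> A) (one : A).
Hypotheses (op_identity : is_identity op one) (op_abelian : abelian_alg op).

Let op1x : left_id one op := fun a => proj1 (op_identity a).
Let opx1 : right_id one op := fun a => proj2 (op_identity a).

Let env2 (a b : A) : nat -> A := fun i => if i is 0 then a else b.

(* Each lemma below applies the term condition to a polynomial in x whose
   two evaluations agree at one substitution for x and become the desired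
   sides at another, one of the two substitutions being the identity. *)
Lemma opAC (a b v : A) : op (op a v) b = op (op a b) v.
Proof.
have := op_abelian (PApp (PApp (PVar A 1) (PVar A 0)) (PVar A 2)) one v
  (env2 a b) (env2 (op a b) one).
by rewrite /= !opx1; apply.
Qed.

Lemma opA_AC (a b v : A) : op a (op v b) = op (op a b) v.
Proof.
have := op_abelian (PApp (PVar A 1) (PApp (PVar A 0) (PVar A 2))) one v
  (env2 a b) (env2 (op a b) one).
by rewrite /= op1x !opx1; apply.
Qed.

Lemma opI : left_injective op.
Proof.
move=> s y y' eq_ys.
have := op_abelian (PApp (PVar A 1) (PVar A 0)) s one
  (fun=> y) (fun=> y').
by rewrite /= !opx1; apply.
Qed.

Lemma opC : commutative op.
Proof. by move=> a b; have := opAC one a b; rewrite !op1x. Qed.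

Lemma opA : associative op.
Proof. by move=> a b c; rewrite opAC opA_AC. Qed.

End AbelianUnitalGroupoid.

Section CancellativeCommutativeMonoid.

Variables (A : finType) (op : A -> A -> A) (one : A).
Hypotheses (op1x : left_id one op) (opC : commutative op)
  (opA : associative op) (opI : left_injective op).

Definition coset_rel (S : {set A}) (a b : A) : Prop :=
  exists s s', [/\ s \in S, s' \in S & op a s = op b s'].

Section Subalgebra.

Variable S : {set A}.
Hypothesis subS : is_subalgebra op S.

Let S_nonempty : S != set0 := proj1 subS.
Let opS : forall a b, a \in S -> b \in S -> op a b \in S := proj2 subS.

Lemma coset_rel_congruence : is_congruence op (coset_rel S).
Proof.
have /set0Pn [s0 Ss0] := S_nonempty.
split; [|split; [|split]].
- by move=> a; exists s0, s0.
- by move=> a b [s [s' [Ss Ss' eq_ab]]]; exists s', s.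
- move=> a b c [s1 [s2 [Ss1 Ss2 eq_ab]]] [s3 [s4 [Ss3 Ss4 eq_bc]]].
  exists (op s1 s3), (op s4 s2); split; rewrite ?opS //.
  by rewrite opA eq_ab -opA [op s2 s3]opC opA eq_bc -opA [op s4 s2]opC.
- move=> a a' b b' [s [s' [Ss Ss' eq_a]]] [t [t' [St St' eq_b]]].
  exists (op s t), (op s' t'); split; rewrite ?opS //.
  by rewrite -opA [op b (op s t)]opA [op b s]opC -opA eq_b opA eq_a
    -opA [op s' (op b' t')]opA [op s' b']opC -opA.
Qed.

(* Right translation by s is injective and maps the finite set S into
   itself, hence onto S. *)
Lemma subalgebra_divr (s t : A) :
  s \in S -> t \in S -> exists2 y, y \in S & op y s = t.
Proof.
move=> Ss St.
have im_S : [set op y s | y in S] = S.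
  apply/eqP; rewrite eqEcard card_in_imset; last by move=> y y' _ _; apply: opI.
  rewrite leqnn andbT.
  by apply/subsetP => _ /imsetP [y Sy ->]; apply: opS.
have /imsetP [y Sy ->] : t \in [set op y s | y in S] by rewrite im_S.
by exists y.
Qed.

Lemma coset_rel1 (x : A) : x \in S <-> coset_rel S one x.
Proof.
split.
  have /set0Pn [s0 Ss0] := S_nonempty.
  by move=> Sx; exists (op x s0), s0; rewrite op1x opS.
move=> [s [s' [Ss Ss' eq_s]]].
have [y Sy def_s] := subalgebra_divr _ _ Ss' Ss.
by rewrite op1x -def_s in eq_s; rewrite -(opI _ _ _ eq_s).
Qed.

End Subalgebra.

Lemma cancel_comm_monoid_hamiltonian : hamiltonian_alg op.
Proof.
move=> S subS; exists (coset_rel S); split; first exact: coset_rel_congruence.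
by exists one => x; apply: coset_rel1.
Qed.

End CancellativeCommutativeMonoid.

Theorem mainTheorem3 (A : finType) (op : A -> A -> A) (one : A) :
  is_identity op one -> abelian_alg op -> hamiltonian_alg op.
Proof.
move=> op_identity op_abelian.
apply: (@cancel_comm_monoid_hamiltonian A op one).
- by move=> a; case: (op_identity a).
- exact: opC op_identity op_abelian.
- exact: opA op_identity op_abelian.
- exact: opI op_identity op_abelian.
Qed.
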